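(* Let $K$ be a finite simplicial complex, $f$ an injective filtration function on $K$, $n$ a positive integer, and $\alpha$ an $n$-cycle whose class $[\alpha]\in H_n(K^f_a)$ is born at $a$ and terminated at a finite value $b>a$. Let $D=(0,\frac{b-a}{2}]$, let $\sigma_1,\ldots,\sigma_m$ be the $(n+1)$-simplices of $K$ and let $\Pi_\varepsilon$ ($\varepsilon\in D$) be as in the context. Suppose $t\in D$ is a point of discontinuity of $\varepsilon\mapsto\Pi_\varepsilon$ (i.e. $\Pi_\varepsilon$ is not constant on any neighbourhood of $t$ in $D$). Then there exist $i\neq j$ such that $2t=|f(\sigma_i)-f(\sigma_j)|$.
   Context: A filtration function on a finite simplicial complex $K$ is a map $f\colon K\to\mathbb{R}$ with $f(\sigma)\le f(\tau)$ whenever $\sigma$ is a face of $\tau$. Sublevel complexes are $K^f_r=f^{-1}((-\infty,r])$; homology is with coefficients in a fixed field. For a nontrivial class $[\alpha]\in H_n(K^f_r)$, its birth is the infimum of $q\le r$ such that $[\alpha]$ is in the image of $H_n(K^f_q)\to H_n(K^f_r)$, and its termination scale is the infimum of $q\ge r$ such that $[\alpha]$ maps to $0$ in $H_n(K^f_q)$. $\|f-g\|_\infty=\max_{\sigma\in K}|f(\sigma)-g(\sigma)|$. An injective $\varepsilon$-perturbation of $f$ is an injective filtration function $g$ with $\|f-g\|_\infty\le\varepsilon$. Each injective filtration function $g$ induces a linear ordering of the $(n+1)$-simplices $\{\sigma_1,\dots,\sigma_m\}$ by increasing $g$-value, regarded as a permutation in $S_m$; $\Pi_\varepsilon$ is the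 set of all permutations so induced by injective $\varepsilon$-perturbations of $f$. *)

From HB Require Import structures.
From mathcomp Require Import all_boot all_order all_algebra all_fingroup.
From mathcomp Require Import reals.
Set Implicit Arguments. Unset Strict Implicit. Unset Printing Implicit Defensive.
Import Order.TTheory GRing.Theory Num.Theory.
Local Open Scope ring_scope.

(* Abstract finite simplicial complex on vertex set 'I_N: a set of nonempty
   vertex sets, closed under taking nonempty subsets. A k-simplex has k+1 vertices. *)
Definition simplicial_complex (N : nat) (K : {set {set 'I_N}}) : Prop :=
  set0 \notin K /\
  forall s t : {set 'I_N}, s \in K -> t \subset s -> t != set0 -> t \in K.

Definition filtration (R : realType) (N : nat) (K : {set {set 'I_N}})
  (f : {set 'I_N} -> R) : Prop :=
  forall s t, s \in K -> t \in K -> s \subset t -> f s <= f t.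

Definition injective_on_K (R : realType) (N : nat) (K : {set {set 'I_N}})
  (f : {set 'I_N} -> R) : Prop :=
  forall s t, s \in K -> t \in K -> f s = f t -> s = t.

Definition sublevel (R : realType) (N : nat) (K : {set {set 'I_N}})
  (f : {set 'I_N} -> R) (r : R) : {set {set 'I_N}} :=
  [set s in K | f s <= r].

Definition is_chain (F : fieldType) (N : nat) (L : {set {set 'I_N}}) (k : nat)
  (c : {ffun {set 'I_N} -> F}) : Prop :=
  forall s, c s != 0 -> (s \in L) && (#|s| == k.+1).

(* oriented simplicial boundary, vertices ordered by their natural order:
   d[v_0..v_k] = sum_i (-1)^i [v_0..^v_i..v_k] *)
Definition boundary (F : fieldType) (N : nat) (c : {ffun {set 'I_N} -> F})
  : {ffun {set 'I_N} -> F} :=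
  [ffun t => \sum_(s : {set 'I_N})
      \sum_(v in s | s :\ v == t) (-1) ^+ #|[set u in s | (u < v)%N]| * c s].

Definition is_cycle (F : fieldType) (N : nat) (L : {set {set 'I_N}}) (k : nat)
  (c : {ffun {set 'I_N} -> F}) : Prop :=
  is_chain L k c /\ boundary c = 0.

Definition is_boundary (F : fieldType) (N : nat) (L : {set {set 'I_N}}) (k : nat)
  (c : {ffun {set 'I_N} -> F}) : Prop :=
  exists d, is_chain L k.+1 d /\ c = boundary d.

(* [alpha] in H_k(K_r) lies in the image of H_k(K_q) -> H_k(K_r)  (q <= r) *)
Definition in_image (F : fieldType) (R : realType) (N : nat) (K : {set {set 'I_N}})
  (f : {set 'I_N} -> R) (k : nat) (alpha : {ffun {set 'I_N} -> F}) (q r : R) : Prop :=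
  exists beta, is_cycle (sublevel K f q) k beta /\
    is_boundary (sublevel K f r) k (alpha - beta).

Definition maps_to_zero (F : fieldType) (R : realType) (N : nat) (K : {set {set 'I_N}})
  (f : {set 'I_N} -> R) (k : nat) (alpha : {ffun {set 'I_N} -> F}) (q : R) : Prop :=
  is_boundary (sublevel K f q) k alpha.

Definition birth (F : fieldType) (R : realType) (N : nat) (K : {set {set 'I_N}})
  (f : {set 'I_N} -> R) (k : nat) (alpha : {ffun {set 'I_N} -> F}) (r : R) : R :=
  reals.inf (fun q => q <= r /\ in_image K f k alpha q r).

Definition terminated_at (F : fieldType) (R : realType) (N : nat) (K : {set {set 'I_N}})
  (f : {set 'I_N} -> R) (k : nat) (alpha : {ffun {set 'I_N} -> F}) (r b : R) : Prop :=
  (exists q, r <= q /\ maps_to_zero K f k alpha q) /\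
  b = reals.inf (fun q => r <= q /\ maps_to_zero K f k alpha q).

Definition inj_perturbation (R : realType) (N : nat) (K : {set {set 'I_N}})
  (f g : {set 'I_N} -> R) (eps : R) : Prop :=
  filtration K g /\ injective_on_K K g /\
  forall s, s \in K -> `|f s - g s| <= eps.

(* the permutation pi in S_m is the ordering of sigma_1..sigma_m by increasing g:
   pi i is the index of the i-th smallest (n+1)-simplex *)
Definition induced_perm (R : realType) (N m : nat) (sigma : 'I_m -> {set 'I_N})
  (g : {set 'I_N} -> R) (pi : 'S_m) : Prop :=
  forall i j : 'I_m, (i < j)%N -> g (sigma (pi i)) < g (sigma (pi j)).

Definition Pi_eps (R : realType) (N m : nat) (K : {set {set 'I_N}})
  (f : {set 'I_N} -> R) (sigma : 'I_m -> {set 'I_N}) (eps : R) (pi : 'S_m) : Prop :=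
  exists g, inj_perturbation K f g eps /\ induced_perm sigma g pi.

From mathcomp Require Import all_boot all_order all_algebra all_fingroup.
From mathcomp Require Import reals.
From mathcomp Require Import lra.
Set Implicit Arguments. Unset Strict Implicit. Unset Printing Implicit Defensive.
Import Order.TTheory GRing.Theory Num.Theory.
Local Open Scope ring_scope.

(* A permutation pi is induced by an injective eps-perturbation of f iff
   f (sigma (pi i)) - f (sigma (pi j)) < 2 eps whenever i < j. Necessity is
   the triangle inequality. For sufficiency, send the (n+1)-simplices to
   strictly increasing values within eps of f, lower simplices down by eps and
   higher ones up by eps; this is a filtration, and mixing in a small generic
   multiple of the injective f makes it injective without changing the order.
   Hence Pi_eps is locally constant in eps away from the finitely many values
   |f sigma_i - f sigma_j| / 2. *)

Section RealFacts.
Variable R : realFieldType.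

Lemma finite_pos_lb (I : finType) (F : I -> R) :
  (forall i, 0 < F i) -> exists2 c : R, 0 < c & forall i, c <= F i.
Proof.
by move=> F_gt0; exists (\big[Num.min/1]_i F i) => [|i];
  [apply: lt_bigmin | apply: bigmin_le].
Qed.

Lemma exists_pos_notin (l : seq R) (c : R) :
  0 < c -> exists t : R, [/\ 0 < t, t < c & t \notin l].
Proof.
move=> c_gt0; set c' := \big[Num.min/1]_(x <- l | 0 < x) x.
have c'_gt0 : 0 < c' by apply: lt_bigmin.
have [le_c le_c'] : Num.min c c' <= c /\ Num.min c c' <= c'.
  by rewrite !ge_min !lexx orbT.
have min_gt0 : 0 < Num.min c c' by rewrite lt_min c_gt0.
exists (Num.min c c' / 2); split; [lra | lra |].
apply/negP => t_l.
have t_gt0 : 0 < Num.min c c' / 2 by lra.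
have := ge_bigmin_seq 1 _ (fun x : R => 0 < x) id t_l t_gt0; rewrite -/c'; lra.
Qed.

Lemma increasing_approx (m : nat) (F : 'I_m -> R) (e : R) : 0 < e ->
  (forall i j : 'I_m, (i < j)%N -> F i - F j < 2 * e) ->
  exists X : 'I_m -> R,
    (forall i j : 'I_m, (i < j)%N -> X i < X j) /\ forall i, `|X i - F i| <= e.
Proof.
(* X i is the running maximum M i of F, shifted down by e and tilted by a drift
   i * k small enough to stay within the slack 2 e - (M i - F i). *)
move=> e_gt0 gapF; pose M i := \big[Num.max/F i]_(j : 'I_m | (j <= i)%N) F j.
have F_le_M (i j : 'I_m) : (j <= i)%N -> F j <= M i.
  by move=> ji; apply: le_bigmax_cond.
have M_le (i j : 'I_m) : (i <= j)%N -> M i <= M j.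
  move=> ij; apply/bigmax_leP; split=> [|k ki]; apply: F_le_M => //.
  exact: leq_trans ki ij.
have M_lt (i : 'I_m) : M i - F i < 2 * e.
  suff : M i < F i + 2 * e by lra.
  apply/bigmax_ltP; split=> [|j]; first lra.
  rewrite leq_eqVlt => /predU1P[/val_inj -> | ji]; first lra.
  by have := gapF _ _ ji; lra.
have [c c_gt0 c_le] : exists2 c, 0 < c & forall i, c <= 2 * e - (M i - F i).
  by apply: finite_pos_lb => i; have := M_lt i; lra.
pose k := c / m%:R.
have drift_le (i : 'I_m) : i%:R * k <= c.
  have i_le : (i%:R <= m%:R :> R) by rewrite ler_nat ltnW.
  by rewrite mulrA ler_pdivrMr ?ltr0n ?(leq_ltn_trans _ (ltn_ord i)) //; nra.
exists (fun i => M i - e + i%:R * k); split=> [i j ij | i].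
  have k_gt0 : 0 < k by rewrite divr_gt0 ?ltr0n ?(leq_ltn_trans _ (ltn_ord j)).
  have := M_le _ _ (ltnW ij); rewrite -(ltr_nat R) in ij; nra.
have := F_le_M i i (leqnn i); have := c_le i; have := drift_le i.
have : 0 <= i%:R * k by rewrite mulr_ge0 ?divr_ge0 ?ler0n ?ltW.
by rewrite ler_norml; move=> *; apply/andP; split; lra.
Qed.

Lemma lt_twice_near (t eps x d : R) : 0 < t -> 0 < eps ->
  d <= `|2 * t - `|x| | -> `|eps - t| < d / 2 -> (x < 2 * eps) = (x < 2 * t).
Proof.
move=> t_gt0 eps_gt0 d_le; rewrite ltr_norml => /andP[? ?].
have [x_ge0 | x_lt0] := lerP 0 x; last by apply/idP/idP => _; lra.
move: d_le; rewrite (ger0_norm x_ge0) ler_normr => /orP[] ?;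
  by apply/idP/idP => ?; lra.
Qed.

End RealFacts.

Section GenericMix.
Variables (R : realFieldType) (T : finType).

Definition mixf (t : R) (B f : T -> R) (x : T) : R := (1 - t) * B x + t * f x.

Lemma generic_mix (K : {pred T}) (B f : T -> R) : {in K &, injective f} ->
  exists t : R, [/\ 0 < t, t < 1, {in K &, injective (mixf t B f)} &
    forall x y, B x < B y -> mixf t B f x < mixf t B f y].
Proof.
move=> f_inj.
pose ratio (xy : T * T) := if B xy.1 < B xy.2
  then (B xy.2 - B xy.1) / (B xy.2 - B xy.1 + `|f xy.1 - f xy.2|) else 1.
have [c c_gt0 c_le] : exists2 c, 0 < c & forall xy, c <= ratio xy.
  apply: finite_pos_lb => -[x y]; rewrite /ratio /=; case: ifP => // lt_xy.
  have := normr_ge0 (f x - f y) => f_ge0.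
  by rewrite divr_gt0 //; lra.
(* If f x != f y, then mixf t B f x = mixf t B f y forces t to be the ratio
   below. *)
pose bad := [seq (B xy.1 - B xy.2) / ((B xy.1 - B xy.2) - (f xy.1 - f xy.2))
  | xy <- enum {: T * T}].
have min_gt0 : 0 < Num.min c 1 by rewrite lt_min c_gt0 ltr01.
have [t [t_gt0 + t_bad]] := exists_pos_notin bad min_gt0.
rewrite lt_min => /andP[t_c t_1]; exists t; split=> // [x y xK yK | x y lt_xy].
  rewrite /mixf => eq_mix; apply: contraTeq t_bad => neq_xy.
  have f_neq : f x - f y != 0.
    by rewrite subr_eq0; apply: contra neq_xy => /eqP/f_inj ->.
  have key : B x - B y = t * ((B x - B y) - (f x - f y)) by nra.
  have den_neq : (B x - B y) - (f x - f y) != 0.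
    apply: contraNneq f_neq => den0; apply/eqP.
    by move: key; rewrite den0 mulr0 => ?; lra.
  rewrite negbK; apply/mapP; exists (x, y); first by rewrite mem_enum.
  by rewrite /= {1}key mulfK.
have := c_le (x, y); rewrite /ratio /= lt_xy => c_ratio.
have := lt_le_trans t_c c_ratio; rewrite ltr_pdivlMr; last first.
  by have := normr_ge0 (f x - f y); lra.
have := ler_norm (f x - f y); have := normr_ge0 (f x - f y).
rewrite /mixf; nra.
Qed.

End GenericMix.

Section Perturbations.
Variables (R : realType) (N : nat) (K : {set {set 'I_N}}) (f : {set 'I_N} -> R).
Hypothesis f_filt : filtration K f.

Lemma approx_filtration (m d : nat) (tau : 'I_m -> {set 'I_N}) (X : 'I_m -> R)
    (e : R) :
  0 <= e -> injective tau -> (forall p, #|tau p| = d) ->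
  (forall p, `|X p - f (tau p)| <= e) ->
  exists B : {set 'I_N} -> R, [/\ filtration K B,
    forall s, `|B s - f s| <= e & forall p, B (tau p) = X p].
Proof.
move=> e_ge0 tau_inj tau_card X_near.
pose B (s : {set 'I_N}) := if [pick p | tau p == s] is Some p then X p
  else f s + (if (#|s| < d)%N then - e else e).
have B_off (s : {set 'I_N}) :
    #|s| != d -> B s = f s + (if (#|s| < d)%N then - e else e).
  by rewrite /B; case: pickP => // p /eqP <-; rewrite tau_card eqxx.
have B_tau p : B (tau p) = X p.
  by rewrite /B; case: pickP => [q /eqP/tau_inj -> // | /(_ p)]; rewrite eqxx.
have B_near (s : {set 'I_N}) : `|B s - f s| <= e.
  rewrite /B; case: pickP => [p /eqP <- // | _].
  by case: ifP => _; rewrite addrAC subrr add0r ?normrN ger0_norm.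
exists B; split=> // s u sK uK su.
have [-> // | neq_su] := eqVneq s u.
have card_lt : (#|s| < #|u|)%N by rewrite proper_card // properEneq neq_su.
have f_le := f_filt sK uK su.
have := B_near s; have := B_near u; rewrite !ler_norml => /andP[? ?] /andP[? ?].
case: (ltnP #|s| d) => [sd | ds].
  by rewrite (B_off s) ?(ltn_eqF sd) // sd; lra.
have du : (d < #|u|)%N := leq_ltn_trans ds card_lt.
by rewrite (B_off u) ?(gtn_eqF du) // ltnNge (ltnW du) /=; lra.
Qed.

Variables (m : nat) (sigma : 'I_m -> {set 'I_N}).
Hypothesis sigma_in : forall i, sigma i \in K.

Lemma Pi_eps_gap e pi : Pi_eps K f sigma e pi ->
  forall i j : 'I_m, (i < j)%N -> f (sigma (pi i)) - f (sigma (pi j)) < 2 * e.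
Proof.
move=> [g [[_ [_ g_near]] g_perm]] i j ij.
have := g_near _ (sigma_in (pi i)); have := g_near _ (sigma_in (pi j)).
by have := g_perm i j ij; rewrite !ler_norml => ? /andP[? ?] /andP[? ?]; lra.
Qed.

Hypotheses (f_inj : injective_on_K K f) (sigma_inj : injective sigma).
Variable d : nat.
Hypothesis sigma_card : forall i, #|sigma i| = d.

Lemma Pi_epsP e pi : 0 < e -> Pi_eps K f sigma e pi <->
  forall i j : 'I_m, (i < j)%N -> f (sigma (pi i)) - f (sigma (pi j)) < 2 * e.
Proof.
move=> e_gt0; split; first exact: Pi_eps_gap.
move=> gap; have [X [X_incr X_near]] := increasing_approx e_gt0 gap.
have [B [B_filt B_near B_tau]] :=
  approx_filtration (tau := fun p => sigma (pi p)) (ltW e_gt0)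
    (inj_comp sigma_inj (@perm_inj _ pi)) (fun p => sigma_card (pi p)) X_near.
have [t [t_gt0 t_lt1 g_inj g_incr]] := generic_mix (K := K) B f_inj.
exists (mixf t B f); split; [split; [|split] |].
- move=> s u sK uK su; have := B_filt s u sK uK su; have := f_filt sK uK su.
  by rewrite /mixf; nra.
- exact: g_inj.
- move=> s _; have -> : f s - mixf t B f s = (t - 1) * (B s - f s).
    by rewrite /mixf; nra.
  rewrite normrM ler0_norm; last lra.
  by have := B_near s; have := normr_ge0 (B s - f s); nra.
- by move=> i j ij; apply: g_incr; rewrite !B_tau; apply: X_incr.
Qed.

End Perturbations.

Theorem lemma3p2 (F : fieldType) (R : realType) (N : nat)
  (K : {set {set 'I_N}}) (HK : simplicial_complex K)
  (f : {set 'I_N} -> R) (Hf : filtration K f) (Hfinj : injective_on_K K f)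
  (n : nat) (Hn : (0 < n)%N)
  (alpha : {ffun {set 'I_N} -> F}) (a b : R)
  (Hcyc : is_cycle (sublevel K f a) n alpha)
  (Hnontriv : ~ is_boundary (sublevel K f a) n alpha)
  (Hbirth : birth K f n alpha a = a)
  (Hterm : terminated_at K f n alpha a b)
  (Hab : a < b)
  (m : nat) (sigma : 'I_m -> {set 'I_N}) (Hsinj : injective sigma)
  (Hsig : forall s, (s \in K) && (#|s| == n.+2) <-> exists i, sigma i = s)
  (t : R) (Ht : 0 < t /\ t <= (b - a) / 2)
  (Hdisc : forall delta : R, 0 < delta ->
     exists eps : R, [/\ 0 < eps, eps <= (b - a) / 2, `|eps - t| < delta &
       ~ (forall pi : 'S_m, Pi_eps K f sigma eps pi <-> Pi_eps K f sigma t pi)]) :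
  exists i j : 'I_m, i != j /\ 2 * t = `|f (sigma i) - f (sigma j)|.
Proof.
have sigma_simplex i : (sigma i \in K) && (#|sigma i| == n.+2).
  by apply/Hsig; exists i.
have sigma_in i : sigma i \in K by case/andP: (sigma_simplex i).
have sigma_card i : #|sigma i| = n.+2 by case/andP: (sigma_simplex i) => _ /eqP.
have PiP := Pi_epsP Hf sigma_in Hfinj Hsinj sigma_card.
case: Ht => t_gt0 _.
pose gap (ij : 'I_m * 'I_m) := `|2 * t - `|f (sigma ij.1) - f (sigma ij.2)| |.
have [/forallP gap_gt0 | ] := boolP [forall ij, 0 < gap ij]; last first.
  rewrite negb_forall => /existsP[[i j]]; rewrite normr_gt0 negbK subr_eq0 /=.
  move=> /eqP tie; exists i, j; split=> //; apply/eqP => ij.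
  by move: tie; rewrite ij subrr normr0; lra.
have [d d_gt0 d_le] := finite_pos_lb gap_gt0.
have [|eps [eps_gt0 _ eps_near Pi_changes]] := Hdisc (d / 2); first lra.
exfalso; apply: Pi_changes => pi; rewrite !PiP //.
have same_side i j := lt_twice_near t_gt0 eps_gt0 (d_le (pi i, pi j)) eps_near.
by split=> gapf i j ij; [rewrite -same_side | rewrite same_side]; apply: gapf.
Qed.
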